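(* Consider the optimization problem \[ \min_{d,\{t_n\},\{P_n\},\{Q_n\}} \ \sum_{n=1}^N (P_n t_n + Q_n t_n) + \frac{\kappa L^3 (D-d)^3}{T^2} \] subject to \[ d \le \sum_{n=1}^N D_n^T,\qquad 2\sum_{n=1}^N t_n \le T - \frac{Ld}{f_B},\qquad 0\le d\le D,\quad P_n\ge 0,\ Q_n\ge 0,\ t_n\ge 0\ \ \forall n\in\{1,\dots,N\}, \] where \[ D_n^T = \min\left( t_n W \ln\left(1+\frac{P_n h_n}{\sigma^2 W}\right),\ t_n W\ln\left(1+\frac{Q_n g_n}{\sigma^2 W}\right)\right). \] Then the optimal $P_n$ and $Q_n$ satisfy $P_n h_n = Q_n g_n$ for all $n\in\{1,\dots,N\}$.
   Context: This models a mobile edge computing system with one mobile device, $N$ decode-and-forward relays operating in time-division multiple access, and a base station. All parameters are given positive constants: $N$ (number of relays), $h_n$ (channel gain from the device to relay $n$), $g_n$ (channel gain from relay $n$ to the base station), $W$ (bandwidth), $\sigma^2$ (noise power spectral density), $\kappa$, $L$, $D$, $T$, and $f_B$. The variables are $d$ (offloaded data), $t_n$ (time slot of relay $n$), $P_n$ (device transmit power to relay $n$), and $Q_n$ (transmit power of relay $n$). *)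

From mathcomp Require Import all_boot all_order all_algebra.
From mathcomp Require Import all_classical all_reals all_analysis.
Set Implicit Arguments. Unset Strict Implicit. Unset Printing Implicit Defensive.
Import Order.TTheory GRing.Theory Num.Theory.
Local Open Scope ring_scope.

(* Data delivered through relay n in slot t_n (decode-and-forward: min of hops). *)
Definition DT (R : realType) (W sigma2 h g t P Q : R) : R :=
  Num.min (t * W * ln (1 + P * h / (sigma2 * W)))
          (t * W * ln (1 + Q * g / (sigma2 * W))).

Definition objective (R : realType) (N : nat) (kappa L D T d : R)
  (t P Q : 'I_N -> R) : R :=
  \sum_(n < N) (P n * t n + Q n * t n) + kappa * L ^+ 3 * (D - d) ^+ 3 / T ^+ 2.

Definition feasible (R : realType) (N : nat) (h g : 'I_N -> R)
  (W sigma2 L D T fB d : R) (t P Q : 'I_N -> R) : Prop :=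
  [/\ d <= \sum_(n < N) DT W sigma2 (h n) (g n) (t n) (P n) (Q n),
      2 * \sum_(n < N) t n <= T - L * d / fB,
      0 <= d /\ d <= D
    & forall n : 'I_N, [/\ 0 <= P n, 0 <= Q n & 0 <= t n]].

Definition optimal (R : realType) (N : nat) (h g : 'I_N -> R)
  (W sigma2 kappa L D T fB d : R) (t P Q : 'I_N -> R) : Prop :=
  feasible h g W sigma2 L D T fB d t P Q /\
  forall (d' : R) (t' P' Q' : 'I_N -> R),
    feasible h g W sigma2 L D T fB d' t' P' Q' ->
    objective kappa L D T d t P Q <= objective kappa L D T d' t' P' Q'.

(* If at an optimum some relay n had Q_n g_n > P_n h_n, the second hop would carry more than the
   first, and lowering Q_n to P_n h_n / g_n would leave D_n^T unchanged (it is the minimum of the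
   two hop rates) while strictly decreasing the energy Q_n t_n.  Swapping the roles of the two hops
   gives the reverse inequality. *)
From mathcomp Require Import all_boot all_order all_algebra.
From mathcomp Require Import all_classical all_reals all_analysis.

Set Implicit Arguments.
Unset Strict Implicit.
Unset Printing Implicit Defensive.

Import Order.TTheory GRing.Theory Num.Theory.
Local Open Scope ring_scope.

Section Relay.

Variable R : realType.

Lemma DT_sym (W s h g t P Q : R) : DT W s h g t P Q = DT W s g h t Q P.
Proof. by rewrite /DT minC. Qed.

Lemma DT_minl (W s h g t P Q : R) :
  0 < W -> 0 < s -> 0 <= t -> 0 <= P * h -> P * h <= Q * g ->
  DT W s h g t P Q = t * W * ln (1 + P * h / (s * W)).
Proof.
move=> W0 s0 t0 Ph0 PhQg; rewrite /DT; apply/min_idPl.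
have sW0 : 0 < s * W by rewrite mulr_gt0.
have le_rate : P * h / (s * W) <= Q * g / (s * W) by rewrite ler_pM2r ?invr_gt0.
have rate_gt1 : 0 < 1 + P * h / (s * W) by rewrite ltr_wpDr // divr_ge0 // ltW.
apply: ler_wpM2l; first by rewrite mulr_ge0 // ltW.
by rewrite ler_ln ?posrE ?lerD2l // (lt_le_trans rate_gt1) ?lerD2l.
Qed.

Lemma ltr_sum_at (N : nat) (n : 'I_N) (F G : 'I_N -> R) :
  (forall i, i != n -> F i = G i) -> F n < G n ->
  \sum_(i < N) F i < \sum_(i < N) G i.
Proof.
move=> eqFG ltFG; rewrite (bigD1 n) //= [X in _ < X](bigD1 n) //=.
have -> : \sum_(i < N | i != n) F i = \sum_(i < N | i != n) G i.
  by apply: eq_bigr => i /eqFG.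
by rewrite ltrD2r.
Qed.

Variables (N : nat) (W sigma2 kappa L D T fB : R).

Lemma objective_sym (d : R) (t P Q : 'I_N -> R) :
  objective kappa L D T d t P Q = objective kappa L D T d t Q P.
Proof. by rewrite /objective; under eq_bigr do rewrite addrC. Qed.

Lemma feasible_sym (h g : 'I_N -> R) (d : R) (t P Q : 'I_N -> R) :
  feasible h g W sigma2 L D T fB d t P Q -> feasible g h W sigma2 L D T fB d t Q P.
Proof.
case=> Hd Ht Hd0 Hn; split=> // [|i]; last by have [] := Hn i.
by under eq_bigr do rewrite -DT_sym.
Qed.

Lemma optimal_sym (h g : 'I_N -> R) (d : R) (t P Q : 'I_N -> R) :
  optimal h g W sigma2 kappa L D T fB d t P Q ->
  optimal g h W sigma2 kappa L D T fB d t Q P.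
Proof.
case=> /feasible_sym feas opt; split=> // d' t' Q' P' /feasible_sym /opt.
by rewrite [X in X <= _]objective_sym [X in _ <= X]objective_sym.
Qed.

Lemma optimal_second_hop_le (h g : 'I_N -> R) (d : R) (t P Q : 'I_N -> R) (n : 'I_N) :
  0 <= h n -> 0 < g n -> 0 < W -> 0 < sigma2 ->
  optimal h g W sigma2 kappa L D T fB d t P Q -> 0 < t n ->
  Q n * g n <= P n * h n.
Proof.
move=> hn gn W0 s0 [[Hd Ht Hd0 Hn] opt] tn; rewrite leNgt; apply/negP => PhQg.
have [Pn _ _] := Hn n.
have Ph0 : 0 <= P n * h n by rewrite mulr_ge0.
pose Q' i := if i == n then P n * h n / g n else Q i.
have Q'n : Q' n * g n = P n * h n by rewrite /Q' eqxx divfK ?gt_eqF.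
have DT_Q' i : DT W sigma2 (h i) (g i) (t i) (P i) (Q' i) =
               DT W sigma2 (h i) (g i) (t i) (P i) (Q i).
  have [->|ni] := eqVneq i n; last by rewrite /Q' (negbTE ni).
  by rewrite [LHS]DT_minl ?[RHS]DT_minl ?Q'n // ltW.
have feas' : feasible h g W sigma2 L D T fB d t P Q'.
  split=> // [|i]; first by under eq_bigr do rewrite DT_Q'.
  have [? ? ?] := Hn i; split=> //; rewrite /Q'; case: eqP => // _.
  by rewrite divr_ge0 // ltW.
have := opt _ _ _ _ feas'; rewrite /objective lerD2r leNgt => /negP; apply.
apply: (ltr_sum_at (n := n)) => [i /negbTE ni|]; first by rewrite /Q' ni.
by rewrite ltrD2l ltr_pM2r // -(ltr_pM2r gn) Q'n.
Qed.

End Relay.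

Theorem lemma1 (R : realType) (N : nat) (h g : 'I_N -> R)
  (W sigma2 kappa L D T fB : R) :
  (0 < N)%N -> (forall n, 0 < h n) -> (forall n, 0 < g n) ->
  0 < W -> 0 < sigma2 -> 0 < kappa -> 0 < L -> 0 < D -> 0 < T -> 0 < fB ->
  forall (d : R) (t P Q : 'I_N -> R),
    optimal h g W sigma2 kappa L D T fB d t P Q ->
    forall n : 'I_N, 0 < t n -> P n * h n = Q n * g n.
Proof.
move=> _ hp gp W0 s0 _ _ _ _ _ d t P Q opt n tn.
apply/le_anti/andP; split.
- exact: optimal_second_hop_le (ltW (gp n)) (hp n) W0 s0 (optimal_sym opt) tn.
- exact: optimal_second_hop_le (ltW (hp n)) (gp n) W0 s0 opt tn.
Qed.
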